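(* Let $P$ be a finite set of predicates, let $\eta = \sigma_1,\ldots,\sigma_n$ be a trace over the alphabet $\Sigma = 2^P$ (so each $\sigma_i \subseteq P$), and let $\varphi$ be an LTLf formula over $P$. Run the query-processing algorithm described in the context on $\eta$ and $\varphi$. If some contiguous sub-trace $\sigma_k,\ldots,\sigma_\ell$ ($1 \le k \le \ell \le n$) of $\eta$ satisfies $\varphi$, then the algorithm returns a contiguous sub-trace $\sigma_k,\ldots,\sigma_\ell$ of $\eta$ with $(\sigma_k,\ldots,\sigma_\ell) \models \varphi$. Moreover, the algorithm processes (reads) $\eta$ at most twice: once forward and at most once backward.
   Context: LTLf syntax over a finite set of predicates $P$: each $p\in P$ is a formula; if $\varphi_1,\varphi_2$ are formulas then so are $\varphi_1\wedge\varphi_2$, $\neg\varphi_1$, $X\varphi_1$ (''next'') and $\varphi_1 U \varphi_2$ (''until''); $F\varphi$ abbreviates $\texttt{True}\, U\, \varphi$. Semantics: for a finite nonempty trace $\eta=\sigma_1,\ldots,\sigma_k$ with $\sigma_i\subseteq P$: $\eta\models p$ iff $p\in\sigma_1$; $\eta\models\varphi_1\wedge\varphi_2$ iff $\eta\models\varphi_1$ and $\eta\models\varphi_2$; $\eta\models\neg\varphi_1$ iff $\eta\not\models\varphi_1$; $\eta\models X\varphi_1$ iff $(\sigma_2,\ldots,\sigma_k)\models\varphi_1$; $\eta\models\varphi_1 U\varphi_2$ iff there is $1\le i\le k$ with $(\sigma_i,\ldots,\sigma_k)\models\varphi_2$ and for each $1\le j\le i$, $(\sigma_j,\ldots,\sigma_k)\models\varphi_1$.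 A DFA is $\mathcal{A}=\langle\Sigma,Q,\delta,q_0,Acc\rangle$ with transition function $\delta:Q\times\Sigma\to Q$, initial state $q_0$, accepting states $Acc\subseteq Q$; it accepts a finite word if its run from $q_0$ ends in $Acc$. It is known (and may be assumed) that for every LTLf formula $\psi$ over $P$ there is a DFA $\mathcal{A}_\psi$ over $2^P$ accepting exactly the traces satisfying $\psi$. The algorithm: construct DFAs $\mathcal{A}_\varphi$ and $\mathcal{A}_{F\varphi}$ (with $\mathcal{A}_\varphi=\langle 2^P,Q,\delta,q_0,Acc\rangle$). Feed $\eta$ letter by letter (forward) to $\mathcal{A}_{F\varphi}$ until it first visits an accepting state, say after reading $\sigma_\ell$; if this never happens, report that no sub-trace exists. Otherwise read $\eta$ backward starting from $\sigma_\ell$, maintaining a set $Q'\subseteq Q$ initialized to $Acc$; upon reading a letter $\sigma$, update $Q' := \{q\in Q : \exists q'\in Q' \text{ with } q'=\delta(q,\sigma)\}$; stop as soon as $q_0\in Q'$, say after reading $\sigma_k$, and return $\sigma_k,\ldots,\sigma_\ell$. *)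

From mathcomp Require Import all_boot.
Set Implicit Arguments. Unset Strict Implicit. Unset Printing Implicit Defensive.

Section LTLf.
Variable P : finType.

Definition letter := {set P}.

Inductive ltlf : Type :=
| LTrue
| Atom of P
| And of ltlf & ltlf
| Not of ltlf
| Next of ltlf
| Until of ltlf & ltlf.

Definition Fin (f : ltlf) : ltlf := Until LTrue f.

(* Semantics on finite traces (only meaningful for nonempty traces). *)
Fixpoint sat (w : seq letter) (f : ltlf) : bool :=
  match f with
  | LTrue => true
  | Atom p => if w is a :: _ then p \in a else false
  | And f1 f2 => sat w f1 && sat w f2
  | Not f1 => ~~ sat w f1
  | Next f1 => (1 < size w) && sat (behead w) f1
  | Until f1 f2 =>
      has (fun i => sat (drop i w) f2 &&
                    all (fun j => sat (drop j w) f1) (iota 0 i.+1))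
          (iota 0 (size w))
  end.

Record dfa : Type := Dfa {
  dstate : finType;
  ddelta : dstate -> letter -> dstate;
  dinit : dstate;
  dacc : {set dstate}
}.

Definition run (A : dfa) (q : dstate A) (w : seq letter) : dstate A :=
  foldl (ddelta (d:=A)) q w.

Definition accepts (A : dfa) (w : seq letter) : bool :=
  run (dinit A) w \in dacc A.

(* contiguous sub-trace sigma_k..sigma_l (0-based indices, inclusive) *)
Definition subtrace (eta : seq letter) (k l : nat) : seq letter :=
  drop k (take l.+1 eta).

Fixpoint fwd_pass (A : dfa) (q : dstate A) (i : nat) (s : seq letter)
  : option nat * seq nat :=
  match s with
  | [::] => (None, [::])
  | a :: s' =>
      let q' := ddelta q a in
      if q' \in dacc A then (Some i, [:: i])
      else let: (r, lg) := fwd_pass q' i.+1 s' in (r, i :: lg)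
  end.

Fixpoint bwd_pass (A : dfa) (Q' : {set dstate A}) (rs : seq (nat * letter))
  : option nat * seq nat :=
  match rs with
  | [::] => (None, [::])
  | (j, a) :: rs' =>
      let Q'' := [set q | ddelta q a \in Q'] in
      if dinit A \in Q'' then (Some j, [:: j])
      else let: (r, lg) := bwd_pass Q'' rs' in (r, j :: lg)
  end.

Record alg_out : Type := AlgOut {
  result : option (nat * nat);   (* Some (k, l): returns subtrace eta k l *)
  fwd_log : seq nat;              (* positions read in the forward pass *)
  bwd_log : seq nat               (* positions read in the backward pass *)
}.

Definition algorithm (Aphi AFphi : dfa) (eta : seq letter) : alg_out :=
  let: (ol, flog) := fwd_pass (dinit AFphi) 0 eta in
  match ol with
  | None => AlgOut None flog [::]
  | Some l =>
      let rs := rev (zip (iota 0 l.+1) (take l.+1 eta)) in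
      let: (ok, blog) := bwd_pass (dacc Aphi) rs in
      match ok with
      | None => AlgOut None flog blog
      | Some k => AlgOut (Some (k, l)) flog blog
      end
  end.

End LTLf.

From mathcomp Require Import all_boot.

Set Implicit Arguments.
Unset Strict Implicit.
Unset Printing Implicit Defensive.

(* The forward pass stops at the first l such that A_{F phi} accepts
   sigma_1..sigma_l, i.e. some suffix sigma_k..sigma_l satisfies phi; this l is
   at most the right end of any sub-trace satisfying phi. After reading
   sigma_l, ..., sigma_j backward, Q' is the set of states from which A_phi
   accepts sigma_j..sigma_l, so the backward pass stops at the largest such k,
   which exists by the choice of l. Each pass reads a contiguous range of
   positions monotonically, so no position is read more than twice. *)

Definition reads_at_most_twice (n : nat) (flog blog : seq nat) : Prop :=
  sorted ltn flog /\ sorted gtn blog /\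
  all (fun i => i < n) (flog ++ blog) /\
  forall i, count_mem i (flog ++ blog) <= 2.

Lemma reads_at_most_twice_iota n a b c d :
  a + b <= n -> c + d <= n -> reads_at_most_twice n (iota a b) (rev (iota c d)).
Proof.
move=> le_ab_n le_cd_n; split; last split; last split.
- exact: iota_ltn_sorted.
- by rewrite rev_sorted iota_ltn_sorted.
- rewrite all_cat all_rev; apply/andP; split; apply/allP => x;
    rewrite mem_iota => /andP[_ lt_x].
  + exact: leq_trans lt_x le_ab_n.
  + exact: leq_trans lt_x le_cd_n.
- move=> i; rewrite count_cat count_rev !count_uniq_mem ?iota_uniq //.
  by case: (_ \in _); case: (_ \in _).
Qed.

Section Algorithm.
Variable P : finType.
Implicit Types (w : seq (letter P)) (f : ltlf P).

Lemma sat_FinP w f :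
  reflect (exists2 k, k < size w & sat (drop k w) f) (sat w (Fin f)).
Proof.
have all_true (s : seq nat) : all (fun _ => true) s by elim: s.
rewrite /=; apply: (iffP hasP) => [[k] | [k lt_k sat_k]].
- by rewrite mem_iota all_true andbT => lt_k sat_k; exists k.
- by exists k; rewrite ?mem_iota ?all_true ?sat_k.
Qed.

Lemma subtrace_neq0 w k l : k <= l < size w -> subtrace w k l != [::].
Proof.
case/andP=> le_kl lt_l.
by rewrite -size_eq0 size_drop size_takel // subn_eq0 -ltnNge ltnS.
Qed.

Lemma take_neq0 w l : l < size w -> take l.+1 w != [::].
Proof. by move=> lt_l; rewrite -(drop0 (take _ _)) subtrace_neq0. Qed.

Variable A : dfa P.

Lemma run_rcons (q : dstate A) w a : run q (rcons w a) = ddelta (run q w) a.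
Proof. exact: foldl_rcons. Qed.

Variant fwd_pass_spec (q : dstate A) (i : nat) w : option nat * seq nat -> Prop :=
| FwdNone of (forall m, m < size w -> run q (take m.+1 w) \notin dacc A) :
    fwd_pass_spec q i w (None, iota i (size w))
| FwdSome m of m < size w & run q (take m.+1 w) \in dacc A :
    fwd_pass_spec q i w (Some (i + m), iota i m.+1).

Lemma fwd_passP (q : dstate A) i w : fwd_pass_spec q i w (fwd_pass q i w).
Proof.
elim: w q i => [|a w IHw] q i /=; first by constructor.
case: ifP => acc_a.
  by rewrite -[i in Some i]addn0; apply: FwdSome; rewrite /run /= ?take0.
case: IHw => [noacc | m lt_m acc_m].
- apply: FwdNone => -[|m] /=; first by rewrite /run /= take0 /= acc_a.
  exact: noacc.
- by rewrite addSnnS; apply: FwdSome.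
Qed.

Variant bwd_pass_spec (Q : {set dstate A}) (i : nat) w :
    option nat * seq nat -> Prop :=
| BwdNone of (forall k, k < size w -> run (dinit A) (drop k w) \notin Q) :
    bwd_pass_spec Q i w (None, rev (iota i (size w)))
| BwdSome k of k < size w & run (dinit A) (drop k w) \in Q :
    bwd_pass_spec Q i w (Some (i + k), rev (iota (i + k) (size w - k))).

Lemma bwd_passP (Q : {set dstate A}) i n w : size w = n ->
  bwd_pass_spec Q i w (bwd_pass Q (rev (zip (iota i n) w))).
Proof.
move <-.
elim/last_ind: w Q => [|w a IHw] Q /=; first by constructor.
rewrite size_rcons -addn1 iotaD cats1 zip_rcons ?size_iota // rev_rcons /=.
have run_drop_rcons k : k <= size w ->
    (run (dinit A) (drop k (rcons w a)) \in Q) =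
    (run (dinit A) (drop k w) \in [set q | ddelta q a \in Q]).
  by move=> le_k; rewrite drop_rcons // run_rcons inE.
have run_last : run (dinit A) (drop (size w) (rcons w a)) = ddelta (dinit A) a.
  by rewrite drop_rcons // drop_size.
rewrite [dinit A \in _]inE; case: ifP => [acc_a | noacc_a].
  have -> : [:: i + size w] = rev (iota (i + size w) (size (rcons w a) - size w)).
    by rewrite size_rcons subSnn.
  by apply: BwdSome; rewrite ?size_rcons // run_last.
case: IHw => [noacc | k lt_k acc_k].
- have -> : (i + size w) :: rev (iota i (size w)) = rev (iota i (size (rcons w a))).
    by rewrite size_rcons -addn1 iotaD rev_cat.
  apply: BwdNone => k; rewrite size_rcons ltnS leq_eqVlt => /orP[/eqP-> | lt_k].
    by rewrite run_last noacc_a.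
  by rewrite run_drop_rcons ?noacc // ltnW.
- have -> : (i + size w) :: rev (iota (i + k) (size w - k)) =
            rev (iota (i + k) (size (rcons w a) - k)).
    by rewrite size_rcons subSn ?(ltnW lt_k) // -addn1 iotaD rev_cat /=
               -addnA subnKC // ltnW.
  by apply: BwdSome; rewrite ?size_rcons ?run_drop_rcons ?(ltnW lt_k) // ltnW.
Qed.

End Algorithm.

Theorem mainTheorem1 (P : finType) (eta : seq (letter P)) (phi : ltlf P)
    (Aphi AFphi : dfa P)
    (HAphi : forall w : seq (letter P), w != [::] ->
               accepts Aphi w = sat w phi)
    (HAFphi : forall w : seq (letter P), w != [::] ->
               accepts AFphi w = sat w (Fin phi)) :
  let out := algorithm Aphi AFphi eta in
  ((exists k l, k <= l < size eta /\ sat (subtrace eta k l) phi) ->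
     exists k l, result out = Some (k, l) /\
       k <= l < size eta /\ sat (subtrace eta k l) phi)
  /\ (sorted ltn (fwd_log out) /\ sorted gtn (bwd_log out) /\
      all (fun i => i < size eta) (fwd_log out ++ bwd_log out) /\
      forall i, count_mem i (fwd_log out ++ bwd_log out) <= 2).
Proof.
move=> out; rewrite /out /algorithm.
case: fwd_passP => [no_prefix | l lt_l acc_l] /=.
  split; last by apply: (@reads_at_most_twice_iota _ 0 _ 0 0); rewrite ?add0n.
  case=> k [l [/andP[le_kl lt_l] sat_kl]]; case/negP: (no_prefix l lt_l).
  rewrite -[_ \in _]/(accepts _ _) HAFphi ?take_neq0 //.
  by apply/sat_FinP; exists k; rewrite ?size_takel.
have size_prefix : size (take l.+1 eta) = l.+1 by rewrite size_takel.
have /sat_FinP[k lt_k sat_k] : sat (take l.+1 eta) (Fin phi).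
  by rewrite -HAFphi ?take_neq0.
case: (bwd_passP (dacc Aphi) 0 size_prefix) => [no_suffix | k' lt_k' acc_k'].
  have /negP[] := no_suffix k lt_k.
  rewrite -[_ \in _]/(accepts _ _) HAphi //; apply: subtrace_neq0.
  by rewrite lt_l andbT -ltnS -size_prefix.
rewrite size_prefix in lt_k' *; split=> [_ | ].
  exists k', l; rewrite -ltnS lt_k' lt_l; split => //; split => //.
  by rewrite -HAphi ?subtrace_neq0 // -ltnS lt_k' lt_l.
apply: (@reads_at_most_twice_iota _ 0 l.+1 k' (l.+1 - k')); first exact: lt_l.
by rewrite subnKC // ltnW.
Qed.
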